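(* Let $\Gamma$ be a subset of $M^{\mathbb{R}}_{n\times n}(\mathbb{C})$ such that for any $A,B\in\Gamma$ there exists a function $p:[0,1]\rightarrow M^{\mathbb{R}}_{n\times n}(\mathbb{C})$ whose entries are analytic functions on $[0,1]$ with $p(0)=A$, $p(1)=B$ and $p([0,1])\subset\Gamma$. Let $\Gamma_d$ be the set of matrices in $\Gamma$ whose eigenvalues are distinct. If $\Gamma$ contains at least one matrix with distinct eigenvalues, then $\Gamma_d$ is dense in $\Gamma$.
   Context: $M^{\mathbb{R}}_{n\times n}(\mathbb{C})$ denotes the set of $n\times n$ complex matrices all of whose eigenvalues are real, with the topology induced by the Frobenius norm. A complex-valued function is analytic on $[0,1]$ if it is the restriction of a function defined on an open interval containing $[0,1]$ which around each point is given by a convergent power series. Distinct eigenvalues means $n$ pairwise different eigenvalues. *)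

From HB Require Import structures.
From mathcomp Require Import all_boot all_order all_algebra.
From mathcomp Require Import reals.
From mathcomp Require Import complex.
Set Implicit Arguments. Unset Strict Implicit. Unset Printing Implicit Defensive.
Import Order.TTheory GRing.Theory Num.Theory.
Local Open Scope ring_scope.

Definition cabs (R : realType) (z : R[i]) : R := Normc.normc z.

Definition frob (R : realType) (n : nat) (A : 'M[R[i]]_n) : R :=
  Num.sqrt (\sum_(i < n) \sum_(j < n) cabs (A i j) ^+ 2).

Definition real_spectrum (R : realType) (n : nat) (A : 'M[R[i]]_n) : Prop :=
  forall z : R[i], eigenvalue A z -> Im z = 0.

Definition distinct_eigs (R : realType) (n : nat) (A : 'M[R[i]]_n) : Prop :=
  exists s : seq R[i], [/\ uniq s, size s = n & all (eigenvalue A) s].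

Definition series_to (R : realType) (u : nat -> R[i]) (L : R[i]) : Prop :=
  forall e : R, 0 < e -> exists N : nat, forall m : nat, (N <= m)%N ->
    cabs (\sum_(k < m) u k - L) < e.

Definition analytic01 (R : realType) (f : R -> R[i]) : Prop :=
  exists (a b : R) (g : R -> R[i]),
    [/\ a < 0, 1 < b,
        (forall x, 0 <= x <= 1 -> g x = f x) &
        (forall x0, a < x0 < b ->
           exists (c : nat -> R[i]) (r : R), 0 < r /\
             forall x, a < x < b -> `|x - x0| < r ->
               series_to (fun k => c k * real_complex R ((x - x0) ^+ k)) (g x))].

From HB Require Import structures.
From mathcomp Require Import all_boot all_order all_algebra all_field.
From mathcomp Require Import boolp classical_sets functions reals.
From mathcomp Require Import complex.
From mathcomp Require Import ring lra.
Import Order.TTheory GRing.Theory Num.Theory.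
Local Open Scope ring_scope.

(* The discriminant [disc_mx M] of the characteristic polynomial, i.e. the
   resultant of chi_M and chi_M', is a polynomial in the entries of M, and it
   is non-zero exactly when M has n distinct eigenvalues.  Join A in Gamma by
   an analytic path p to some B in Gamma with distinct eigenvalues.  Functions
   analytic at a point form a ring, so t |-> disc_mx (p t) is analytic at every
   point of [0,1]; it does not vanish at t = 1, hence, by the identity theorem,
   it does not vanish identically on any [0,d].  This yields points p t of
   Gamma_d with t arbitrarily small, and p t -> A as t -> 0. *)

Set Implicit Arguments. Unset Strict Implicit. Unset Printing Implicit Defensive.

(** * Discriminant of a matrix *)

(* mxpoly's [map_resultant] only covers morphisms out of a polynomial ring. *)
Lemma rmorph_resultant (aR rR : nzRingType) (f : {rmorphism aR -> rR})
    (p q : {poly aR}) :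
    f (lead_coef p) != 0 -> f (lead_coef q) != 0 ->
  f (resultant p q) = resultant (map_poly f p) (map_poly f q).
Proof.
move=> nz_fp nz_fq; rewrite /resultant /Sylvester_mx !size_map_poly_id0 //.
rewrite -det_map_mx map_col_mx; congr (\det (col_mx _ _));
  by apply: map_lin1_mx => v; rewrite map_poly_rV rmorphM /= map_rVpoly.
Qed.

Definition disc_mx (K : comNzRingType) (n : nat) (M : 'M[K]_n) : K :=
  resultant (char_poly M) (char_poly M)^`().

Lemma lead_coef_deriv_char_poly (K : comNzRingType) n (M : 'M[K]_n.+1) :
  n.+1%:R != 0 :> K -> lead_coef (char_poly M)^`() = n.+1%:R.
Proof.
move=> nK; have chi_sz := size_char_poly M.
have chi_n : (char_poly M)^`()`_n = n.+1%:R.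
  have := monicP (char_poly_monic M); rewrite lead_coefE chi_sz /= => lc1.
  by rewrite coef_deriv lc1.
have sz : size (char_poly M)^`() = n.+1.
  apply/anti_leq/andP; split.
    by rewrite -ltnS -chi_sz lt_size_deriv // -size_poly_eq0 chi_sz.
  rewrite ltnNge; apply: contra nK => /leq_sizeP/(_ n (leqnn n)).
  by rewrite chi_n => ->.
by rewrite lead_coefE sz.
Qed.

Lemma map_disc_mx (K : comNzRingType) (L : numDomainType)
    (f : {rmorphism K -> L}) n (M : 'M[K]_n.+1) :
  f (disc_mx M) = disc_mx (map_mx f M).
Proof.
have nK : n.+1%:R != 0 :> K.
  by apply/eqP => /(congr1 f); rewrite rmorph_nat rmorph0 => /eqP; rewrite pnatr_eq0.
rewrite /disc_mx rmorph_resultant.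
- by rewrite map_char_poly -deriv_map map_char_poly.
- by rewrite (monicP (char_poly_monic M)) rmorph1 oner_neq0.
- by rewrite lead_coef_deriv_char_poly // rmorph_nat pnatr_eq0.
Qed.

Lemma disc_mx_neq0 (F : idomainType) n (M : 'M[F]_n) :
  (disc_mx M != 0) = separable_poly (char_poly M).
Proof.
rewrite /disc_mx resultant_eq0 unlock /separable_poly coprimep_def -leqNgt.
have : gcdp (char_poly M) (char_poly M)^`() != 0.
  by rewrite gcdp_eq0 negb_and -size_poly_eq0 size_char_poly.
by rewrite -size_poly_eq0; case: (size _) => [|[|k]].
Qed.

Lemma separable_char_polyP (F : closedFieldType) n (M : 'M[F]_n) :
  separable_poly (char_poly M) <->
  exists s : seq F, [/\ uniq s, size s = n & all (eigenvalue M) s].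
Proof.
split.
  have [r def_chi] := closed_field_poly_normal (char_poly M).
  rewrite (monicP (char_poly_monic M)) scale1r in def_chi.
  rewrite def_chi separable_prod_XsubC => r_uniq; exists r; split => //.
    by apply: succn_inj; rewrite -(size_char_poly M) def_chi size_prod_XsubC.
  by apply/allP => z zr; rewrite eigenvalue_root_char def_chi root_prod_XsubC.
case=> s [s_uniq s_size s_eig].
have s_roots : all (root (char_poly M)) s.
  by apply/allP => z /(allP s_eig); rewrite eigenvalue_root_char.
have s_dvd := uniq_roots_dvdp s_roots (ltac:(by rewrite uniq_rootsE)).
have <- : \prod_(z <- s) ('X - z%:P) = char_poly M.
  apply/eqP; rewrite -eqp_monic ?monic_prod_XsubC ?char_poly_monic //.
  by rewrite -dvdp_size_eqp // size_prod_XsubC size_char_poly s_size.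
by rewrite separable_prod_XsubC.
Qed.

Lemma disc_mx_distinct_eigs (R : realType) n (M : 'M[R[i]]_n) :
  disc_mx M != 0 <-> distinct_eigs M.
Proof. by rewrite disc_mx_neq0; exact: separable_char_polyP. Qed.

Lemma rpred_det (T : comNzRingType) (S : subringClosed T) n (A : 'M[T]_n) :
  (forall i j, A i j \in S) -> \det A \in S.
Proof.
move=> AS; apply: rpred_sum => s _; apply: rpredM; first exact: rpred_sign.
by apply: rpred_prod => i _; exact: AS.
Qed.

Lemma rpred_disc_mx (T : comNzRingType) (S : subringClosed T) n (A : 'M[T]_n) :
  (forall i j, A i j \in S) -> disc_mx A \in S.
Proof.
move=> AS; have chiS : char_poly A \is a polyOver S.
  rewrite /char_poly; apply: rpred_det => i j; rewrite !mxE; apply: rpredB.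
    by apply: rpredMn; exact: polyOverX.
  by rewrite polyOverC.
have dchiS : (char_poly A)^`() \is a polyOver S by exact: polyOver_deriv.
rewrite /disc_mx /resultant; apply: rpred_det => i j; rewrite Sylvester_mxE.
by case: (fintype.split i) => k; apply: rpredMn;
  [move/polyOverP: chiS | move/polyOverP: dchiS].
Qed.

Lemma sum_expr_le2 (R : realFieldType) (x : R) N :
  0 <= x -> x <= 2^-1 -> \sum_(j < N) x ^+ j <= 2.
Proof.
move=> x0 x2; elim: N => [|N IH]; first by rewrite big_ord0.
rewrite big_ord_recl expr0; under eq_bigr do rewrite exprS.
have : x * \sum_(i < N) x ^+ i <= 2^-1 * 2.
  by apply: ler_pM => //; apply: sumr_ge0 => i _; exact: exprn_ge0.
by rewrite -mulr_sumr mulVf ?pnatr_eq0 //; lra.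
Qed.

Lemma natr_le_exp2 (R : numDomainType) m : m.+1%:R <= 2 ^+ m :> R.
Proof. by rewrite -natrX ler_nat ltn_expl. Qed.

Lemma le0_of_le_linear (R : realFieldType) (x K r : R) : 0 < r ->
  (forall h, 0 < h -> h <= r -> x <= K * h) -> x <= 0.
Proof.
move=> r0 x_le; rewrite leNgt; apply/negP => x0.
have K0 : 0 < K by rewrite -(pmulr_lgt0 _ r0); apply: lt_le_trans (x_le r r0 (lexx r)).
pose h := Num.min r (x / (2 * K)).
have h0 : 0 < h by rewrite lt_min r0 divr_gt0 // mulr_gt0.
have : K * h <= K * (x / (2 * K)) by rewrite ler_pM2l // ge_min lexx orbT.
have -> : K * (x / (2 * K)) = x / 2 by field; rewrite lt0r_neq0.
by have := x_le h h0 (ltac:(by rewrite ge_min lexx)); lra.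
Qed.

Lemma le0_of_le_geometric (R : archiRealFieldType) (x M : R) :
  (forall N, x <= M * 2^-1 ^+ N) -> x <= 0.
Proof.
move=> x_le; rewrite leNgt; apply/negP => x0.
have M0 : 0 < M by have := x_le 0%N; rewrite expr0 mulr1; apply: lt_le_trans.
have x_le_M N : x * N.+1%:R <= M.
  have halfN : 2^-1 ^+ N * N.+1%:R <= 1 :> R.
    rewrite exprVn -[X in _ <= X](@mulVf _ (2 ^+ N)) ?expf_neq0 ?pnatr_eq0 //.
    by apply: ler_wpM2l; rewrite ?invr_ge0 ?exprn_ge0 ?natr_le_exp2.
  apply: le_trans (ler_wpM2r (ler0n _ N.+1) (x_le N)) _.
  by rewrite -mulrA; apply: ler_piMr; rewrite ?(ltW M0) ?mulr_ge0 ?exprn_ge0 ?invr_ge0.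
have := archi_boundP (ltW (divr_gt0 M0 x0)); rewrite ltr_pdivrMr // mulrC.
by have := x_le_M (Num.bound (M / x)); rewrite -natr1; lra.
Qed.

Lemma exists_delta_fin (R : realDomainType) (I : finType) (P : I -> R -> Prop) :
  (forall i d d', 0 < d' <= d -> P i d -> P i d') ->
  (forall i, exists2 d, 0 < d & P i d) -> exists2 d, 0 < d & forall i, P i d.
Proof.
move=> P_le P_ex.
suff [d d0 Pd] : exists2 d, 0 < d & forall i, i \in enum I -> P i d.
  by exists d => // i; apply: Pd; rewrite mem_enum.
elim: (enum I) => [|i s [d d0 Pd]]; first by exists 1.
have [di di0 Pi] := P_ex i.
have m0 : 0 < Num.min d di by rewrite lt_min d0 di0.
exists (Num.min d di) => // j; rewrite inE => /orP[/eqP -> | js].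
  by apply: P_le Pi; rewrite m0 ge_min lexx orbT.
by apply: P_le (Pd j js); rewrite m0 ge_min lexx.
Qed.

Definition cauchy (K : pzSemiRingType) (a b : nat -> K) (k : nat) : K :=
  \sum_(i < k.+1) a i * b (k - i)%N.

Lemma horner_poly_mul_tail (K : comNzRingType) (a b : nat -> K) (x : K) N :
  (\poly_(k < N) a k).[x] * (\poly_(k < N) b k).[x]
    - \sum_(k < N) cauchy a b k * x ^+ k
  = \sum_(j < N) ((\poly_(k < N) a k) * \poly_(k < N) b k)`_(N + j) * x ^+ (N + j).
Proof.
set Pa := \poly_(k < N) a k; set Pb := \poly_(k < N) b k.
rewrite -hornerM (@horner_coef_wide _ (N + N)); last first.
  apply: leq_trans (size_polyMleq _ _) (leq_trans (leq_pred _) _).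
  exact: leq_add (size_poly N a) (size_poly N b).
rewrite big_split_ord /=.
have -> : \sum_(i < N) (Pa * Pb)`_(lshift N i) * x ^+ (lshift N i)
    = \sum_(k < N) cauchy a b k * x ^+ k.
  apply: eq_bigr => k _; rewrite coefM /=; congr (_ * _).
  apply: eq_bigr => i _; rewrite !coef_poly.
  have ik : (i < N)%N by apply: leq_ltn_trans (ltn_ord k); rewrite -ltnS.
  have kiN : (k - i < N)%N by apply: leq_ltn_trans (ltn_ord k); rewrite leq_subr.
  by rewrite ik kiN.
by rewrite addrAC subrr add0r.
Qed.

Section ComplexModulus.
Variable R : realType.
Local Open Scope complex_scope.
Implicit Types (z w u : R[i]) (x : R).

Lemma cabsE z : (cabs z)%:C = `|z|.
Proof. by rewrite normc_def; case: z. Qed.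

Lemma cabs_ge0 z : 0 <= cabs z.
Proof. by rewrite -lecR rmorph0 cabsE. Qed.

Lemma ler_cabsD z w : cabs (z + w) <= cabs z + cabs w.
Proof. by rewrite -lecR rmorphD /= !cabsE ler_normD. Qed.

Lemma cabsM z w : cabs (z * w) = cabs z * cabs w.
Proof. by apply: complexI; rewrite rmorphM /= !cabsE normrM. Qed.

Lemma cabsN z : cabs (- z) = cabs z.
Proof. by apply: complexI; rewrite !cabsE normrN. Qed.

Lemma cabs_distC z w : cabs (z - w) = cabs (w - z).
Proof. by rewrite -cabsN opprB. Qed.

Lemma ler_cabsB z w : cabs (z - w) <= cabs z + cabs w.
Proof. by rewrite -(cabsN w) ler_cabsD. Qed.

Lemma ler_cabs_distD z w u : cabs (z - u) <= cabs (z - w) + cabs (w - u).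
Proof.
have -> : z - u = (z - w) + (w - u) by rewrite addrA subrK.
exact: ler_cabsD.
Qed.

Lemma cabsR x : cabs x%:C = `|x|.
Proof. by rewrite /cabs /= expr0n /= addr0 sqrtr_sqr. Qed.

Lemma cabs0 : cabs (0 : R[i]) = 0.
Proof. by rewrite -(rmorph0 (real_complex R)) cabsR normr0. Qed.

Lemma cabs_eq0 z : (cabs z == 0) = (z == 0).
Proof. by rewrite -(inj_eq (@complexI R)) cabsE rmorph0 normr_eq0. Qed.

Lemma ler_cabs_sum (I : Type) (r : seq I) (P : pred I) (F : I -> R[i]) :
  cabs (\sum_(i <- r | P i) F i) <= \sum_(i <- r | P i) cabs (F i).
Proof.
elim/big_rec2: _ => [|i y1 y2 _ h]; first by rewrite cabs0.
by apply: le_trans (ler_cabsD _ _) _; rewrite lerD2l.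
Qed.

End ComplexModulus.

Lemma frob_le (R : realType) n (X : 'M[R[i]]_n) (eta : R) : 0 <= eta ->
  (forall i j, cabs (X i j) <= eta) -> frob X <= n%:R * eta.
Proof.
move=> eta0 X_le; rewrite /frob -(ger0_norm (mulr_ge0 (ler0n _ n) eta0)) -sqrtr_sqr.
have -> : (n%:R * eta) ^+ 2 = \sum_(i < n) \sum_(j < n) eta ^+ 2.
  by rewrite !sumr_const !card_ord -mulrnA exprMn -natrX mulr_natl.
apply: ler_wsqrtr; apply: ler_sum => i _; apply: ler_sum => j _.
by apply: lerXn2r; rewrite ?nnegrE ?cabs_ge0 ?X_le.
Qed.

(** * Quantitative power series *)

Section PowerSeries.
Variable R : realType.
Local Open Scope complex_scope.
Implicit Types (f g : R -> R[i]) (c : nat -> R[i]) (s h M r : R).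

Definition psum c h N : R[i] := \sum_(k < N) c k * (h ^+ k)%:C.

(* Analyticity at [s] in a quantitative form which, unlike mere convergence
   of the series, is preserved by products (see [ps_approx_mul]). *)
Definition ps_approx f s c M r : Prop :=
  forall h, `|h| <= r -> forall N,
    cabs (f (s + h) - psum c h N) <= M * (`|h| / r) ^+ N.

Definition analytic_at s f : Prop :=
  exists c M r, 0 < r /\ ps_approx f s c M r.

Lemma psumS c h N : psum c h N.+1 = psum c h N + c N * (h ^+ N)%:C.
Proof. by rewrite /psum big_ord_recr. Qed.

Lemma psum_horner c h N : psum c h N = (\poly_(k < N) c k).[h%:C].
Proof. by rewrite horner_poly; apply: eq_bigr => k _; rewrite rmorphXn. Qed.

Lemma ps_approx_cabs_le f s c M r h :
  ps_approx f s c M r -> `|h| <= r -> cabs (f (s + h)) <= M.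
Proof. by move=> fs hr; have := fs h hr 0%N; rewrite /psum big_ord0 subr0 mulr1. Qed.

Lemma ps_approx_ge0 f s c M r : 0 < r -> ps_approx f s c M r -> 0 <= M.
Proof.
move=> r0 fs; apply: le_trans (cabs_ge0 _) (ps_approx_cabs_le (h := 0) fs _).
by rewrite normr0 ltW.
Qed.

Lemma ps_approx_le f s c M r r' :
  0 < r' -> r' <= r -> ps_approx f s c M r -> ps_approx f s c M r'.
Proof.
move=> r'0 r'r fs h hr N; have r0 : 0 < r by apply: lt_le_trans r'r.
apply: le_trans (fs h (le_trans hr r'r) N) _.
apply: ler_wpM2l; first exact: ps_approx_ge0 fs.
have q0 (x : R) : 0 < x -> 0 <= `|h| / x by move=> x0; rewrite divr_ge0 // ltW.
apply: lerXn2r; rewrite ?nnegrE ?q0 //.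
by apply: ler_wpM2l => //; rewrite lef_pV2 ?posrE.
Qed.

Lemma analytic_at_common s f g :
  analytic_at s f -> analytic_at s g ->
  exists cf cg Mf Mg r,
    [/\ 0 < r, ps_approx f s cf Mf r & ps_approx g s cg Mg r].
Proof.
move=> [cf [Mf [r1 [r10 fs]]]] [cg [Mg [r2 [r20 gs]]]].
have r0 : 0 < Num.min r1 r2 by rewrite lt_min r10 r20.
exists cf, cg, Mf, Mg, (Num.min r1 r2); split => //.
  by apply: ps_approx_le fs; rewrite ?ge_min ?lexx.
by apply: ps_approx_le gs; rewrite ?ge_min ?lexx ?orbT.
Qed.

Lemma ps_approx_term f s c M r h k : 0 < r -> ps_approx f s c M r -> `|h| <= r ->
  cabs (c k * (h ^+ k)%:C) <= 2 * M * (`|h| / r) ^+ k.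
Proof.
move=> r0 fs hr.
have -> : c k * (h ^+ k)%:C = (f (s + h) - psum c h k) - (f (s + h) - psum c h k.+1).
  by rewrite psumS; ring.
apply: le_trans (ler_cabsB _ _) _.
have q0 : 0 <= `|h| / r by rewrite divr_ge0 // ltW.
have q1 : `|h| / r <= 1 by rewrite ler_pdivrMr // mul1r.
have : M * (`|h| / r) ^+ k.+1 <= M * (`|h| / r) ^+ k.
  by apply: ler_wpM2l; [exact: ps_approx_ge0 fs | rewrite exprS ler_piMl ?exprn_ge0].
by have := fs h hr k; have := fs h hr k.+1; lra.
Qed.

Lemma ps_approx_poly_term f s c M r h N k : 0 < r -> ps_approx f s c M r ->
  `|h| <= r -> cabs ((\poly_(i < N) c i)`_k * h%:C ^+ k) <= 2 * M * (`|h| / r) ^+ k.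
Proof.
move=> r0 fs hr; rewrite coef_poly; case: ifP => _.
  by rewrite -rmorphXn; exact: ps_approx_term fs hr.
rewrite mul0r cabs0 !mulr_ge0 ?exprn_ge0 ?divr_ge0 ?(ltW r0) //.
exact: ps_approx_ge0 fs.
Qed.

Lemma ps_approx_cst s a :
  ps_approx (fun=> a) s (fun k => if k == 0%N then a else 0) (cabs a) 1.
Proof.
move=> h h1 [|N]; first by rewrite /psum big_ord0 subr0 expr0 mulr1.
rewrite /psum big_ord_recl /= expr0 mulr1 big1 ?addr0 ?subrr ?cabs0 => [|i _].
  by rewrite mulr_ge0 ?exprn_ge0 ?cabs_ge0 ?divr_ge0.
by rewrite mul0r.
Qed.

Lemma ps_approx_sub f g s cf cg Mf Mg r :
  ps_approx f s cf Mf r -> ps_approx g s cg Mg r ->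
  ps_approx (fun x => f x - g x) s (fun k => cf k - cg k) (Mf + Mg) r.
Proof.
move=> fs gs h hr N.
have -> : f (s + h) - g (s + h) - psum (fun k => cf k - cg k) h N =
    (f (s + h) - psum cf h N) - (g (s + h) - psum cg h N).
  by rewrite /psum; under eq_bigr do rewrite mulrBl; rewrite sumrB; ring.
by apply: le_trans (ler_cabsB _ _) _; rewrite mulrDl lerD ?fs ?gs.
Qed.

Lemma ps_approx_mul_coef f g s cf cg Mf Mg r h N m : 0 < r ->
  ps_approx f s cf Mf r -> ps_approx g s cg Mg r -> `|h| <= r ->
  cabs (((\poly_(k < N) cf k) * \poly_(k < N) cg k)`_m * h%:C ^+ m)
    <= m.+1%:R * (4 * Mf * Mg) * (`|h| / r) ^+ m.
Proof.
move=> r0 fs gs hr; set q := `|h| / r.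
rewrite coefM mulr_suml; apply: le_trans (ler_cabs_sum _ _ _) _.
apply: le_trans (ler_sum _ (fun (i : 'I_m.+1) _ => _ : _ <= 4 * Mf * Mg * q ^+ m)) _.
  move=> i _; have im : (i <= m)%N by rewrite -ltnS.
  have -> : h%:C ^+ m = h%:C ^+ i * h%:C ^+ (m - i) by rewrite -exprD subnKC.
  have -> : q ^+ m = q ^+ i * q ^+ (m - i) by rewrite -exprD subnKC.
  have -> : 4 * Mf * Mg * (q ^+ i * q ^+ (m - i))
      = (2 * Mf * q ^+ i) * (2 * Mg * q ^+ (m - i)) by ring.
  rewrite mulrACA cabsM; apply: ler_pM; rewrite ?cabs_ge0 //.
    exact: ps_approx_poly_term fs hr.
  exact: ps_approx_poly_term gs hr.
by rewrite sumr_const card_ord -(mulr_natl (4 * Mf * Mg * q ^+ m)) mulrA.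
Qed.

Lemma ps_approx_mul_tail f g s cf cg Mf Mg r h N : 0 < r ->
  ps_approx f s cf Mf r -> ps_approx g s cg Mg r -> `|h| <= r / 4 ->
  cabs (psum cf h N * psum cg h N - psum (cauchy cf cg) h N)
    <= 8 * Mf * Mg * (`|h| / (r / 4)) ^+ N.
Proof.
move=> r0 fs gs hr4.
have hr : `|h| <= r by lra.
have K0 : 0 <= 4 * Mf * Mg.
  by rewrite !mulr_ge0 ?(ps_approx_ge0 r0 fs) ?(ps_approx_ge0 r0 gs).
set q := `|h| / r.
have q0 : 0 <= q by rewrite divr_ge0 // ltW.
have q4 : 4 * q <= 1 by rewrite /q mulrA ler_pdivrMr // mul1r; lra.
have -> : `|h| / (r / 4) = 4 * q by rewrite /q invfM invrK; ring.
have -> : psum (cauchy cf cg) h N = \sum_(k < N) cauchy cf cg k * h%:C ^+ k.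
  by apply: eq_bigr => k _; rewrite rmorphXn.
rewrite !psum_horner horner_poly_mul_tail.
apply: le_trans (ler_cabs_sum _ _ _) _.
(* [(m + 1) q^m <= (2 q)^m], so the tail is geometric once [4 |h| <= r]. *)
have term m : cabs (((\poly_(k < N) cf k) * \poly_(k < N) cg k)`_m * h%:C ^+ m)
    <= 4 * Mf * Mg * (2 * q) ^+ m.
  apply: le_trans (ps_approx_mul_coef N m r0 fs gs hr) _.
  rewrite [(2 * q) ^+ m]exprMn [in X in _ <= X]mulrA.
  apply: ler_wpM2r; first exact: exprn_ge0.
  by rewrite mulrC; apply: ler_wpM2l => //; exact: natr_le_exp2.
apply: le_trans (ler_sum _ (fun (j : 'I_N) _ => term (N + j)%N)) _.
under eq_bigr do rewrite exprD mulrA.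
rewrite -mulr_sumr.
have q2_0 : 0 <= 2 * q by rewrite mulr_ge0.
have geom := sum_expr_le2 N q2_0 (ltac:(lra)).
apply: le_trans (ler_wpM2l (mulr_ge0 K0 (exprn_ge0 N q2_0)) geom) _.
have -> : 8 * Mf * Mg * (4 * q) ^+ N = 4 * Mf * Mg * (4 * q) ^+ N * 2 by ring.
apply: ler_wpM2r => //; apply: ler_wpM2l => //.
by apply: lerXn2r; rewrite ?nnegrE; lra.
Qed.

Lemma ps_approx_mul f g s cf cg Mf Mg r : 0 < r ->
  ps_approx f s cf Mf r -> ps_approx g s cg Mg r ->
  ps_approx (fun x => f x * g x) s (cauchy cf cg) (11 * Mf * Mg) (r / 4).
Proof.
move=> r0 fs gs h hr4 N.
have hr : `|h| <= r by lra.
have Mf0 := ps_approx_ge0 r0 fs; have Mg0 := ps_approx_ge0 r0 gs.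
set q := `|h| / r.
have q0 : 0 <= q by rewrite divr_ge0 // ltW.
have q1 : q ^+ N <= 1 by rewrite exprn_ile1 // ler_pdivrMr // mul1r.
have qq : Mf * Mg * q ^+ N <= Mf * Mg * (`|h| / (r / 4)) ^+ N.
  apply: ler_wpM2l; first exact: mulr_ge0.
  apply: lerXn2r; rewrite ?nnegrE ?divr_ge0 ?(ltW r0) //.
  by apply: ler_wpM2l => //; rewrite lef_pV2 ?posrE //; lra.
set F := f (s + h); set G := g (s + h); set A := psum cf h N; set B := psum cg h N.
have eF : cabs (F - A) <= Mf * q ^+ N := fs h hr N.
have eG : cabs (G - B) <= Mg * q ^+ N := gs h hr N.
have bG : cabs G <= Mg := ps_approx_cabs_le gs hr.
have bA : cabs A <= 2 * Mf.
  have := ler_cabs_distD A F 0; rewrite !subr0 cabs_distC.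
  have := ps_approx_cabs_le fs hr; have : Mf * q ^+ N <= Mf by rewrite ler_piMr.
  by lra.
have eAB := ps_approx_mul_tail N r0 fs gs hr4.
have -> : F * G - psum (cauchy cf cg) h N
    = (F - A) * G + A * (G - B) + (A * B - psum (cauchy cf cg) h N) by ring.
apply: le_trans (ler_cabsD _ _) _; apply: le_trans (lerD (ler_cabsD _ _) (lexx _)) _.
rewrite !cabsM.
have t1 : cabs (F - A) * cabs G <= Mf * Mg * q ^+ N.
  by rewrite mulrAC; apply: ler_pM; rewrite ?cabs_ge0.
have t2 : cabs A * cabs (G - B) <= 2 * (Mf * Mg * q ^+ N).
  have -> : 2 * (Mf * Mg * q ^+ N) = (2 * Mf) * (Mg * q ^+ N) by ring.
  by apply: ler_pM; rewrite ?cabs_ge0.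
by lra.
Qed.

Lemma ps_approx_lipschitz f s c M r : 0 < r ->
  ps_approx f s c M r -> forall h, `|h| <= r -> cabs (f (s + h) - f s) <= M / r * `|h|.
Proof.
move=> r0 fs h hr.
have psum1 x : psum c x 1 = c 0%N by rewrite /psum big_ord1 expr0 rmorph1 mulr1.
have fs0 : f s = c 0%N.
  have := fs 0 (ltac:(by rewrite normr0 ltW)) 1%N.
  rewrite addr0 psum1 normr0 mul0r expr1 mulr0 => le0.
  by apply/eqP; rewrite -subr_eq0 -cabs_eq0 eq_le le0 cabs_ge0.
have := fs h hr 1%N; rewrite psum1 -fs0 expr1 => /le_trans; apply.
by rewrite mulrA mulrAC.
Qed.

Lemma analytic_at_cont f s eta :
  analytic_at s f -> 0 < eta ->
  exists2 d, 0 < d & forall h, `|h| <= d -> cabs (f (s + h) - f s) <= eta.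
Proof.
move=> [c [M [r [r0 fs]]]] eta0; have M0 := ps_approx_ge0 r0 fs.
exists (Num.min r (eta * r / (M + 1))) => [|h].
  by rewrite lt_min r0 !divr_gt0 ?mulr_gt0 //; lra.
rewrite le_min => /andP[hr he]; apply: le_trans (ps_approx_lipschitz r0 fs hr) _.
apply: le_trans (_ : M / r * (eta * r / (M + 1)) <= _).
  by apply: ler_wpM2l => //; rewrite divr_ge0 // ltW.
have -> : M / r * (eta * r / (M + 1)) = eta * (M / (M + 1)).
  by field; rewrite !lt0r_neq0 //; lra.
by apply: ler_piMr; rewrite ?(ltW eta0) // ler_pdivrMr ?mul1r; lra.
Qed.

(** * Identity theorem *)

Lemma ps_approx_coef_eq0 f s c M r : 0 < r -> ps_approx f s c M r ->
  (forall h, - r <= h -> h < 0 -> f (s + h) = 0) -> forall k, c k = 0.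
Proof.
move=> r0 fs f0; elim/ltn_ind => k IH.
apply/eqP; rewrite -cabs_eq0 eq_le cabs_ge0 andbT.
apply: (@le0_of_le_linear _ _ (M / r ^+ k.+1) r r0) => h h0 hr.
have hN : 0 < h ^+ k by rewrite exprn_gt0.
have := fs (- h) (ltac:(by rewrite normrN gtr0_norm)) k.+1.
have psum0 : psum c (- h) k = 0 by rewrite /psum big1 // => i _; rewrite IH ?mul0r.
rewrite f0 ?lerN2 ?oppr_lt0 // psumS psum0 !add0r cabsN cabsM cabsR normrX normrN.
rewrite (gtr0_norm h0) => ck_le; rewrite -(ler_pM2r hN).
have -> : M / r ^+ k.+1 * h * h ^+ k = M * (h / r) ^+ k.+1.
  by rewrite expr_div_n (exprS h); set a := h ^+ k; set b := r ^+ k.+1; ring.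
exact: ck_le.
Qed.

Lemma ps_approx_vanish f s c M r : 0 < r -> ps_approx f s c M r ->
  (forall h, - r <= h -> h < 0 -> f (s + h) = 0) ->
  forall h, `|h| <= r / 2 -> f (s + h) = 0.
Proof.
move=> r0 fs f0 h hr; have c0 := ps_approx_coef_eq0 r0 fs f0.
apply/eqP; rewrite -cabs_eq0 eq_le cabs_ge0 andbT.
apply: (@le0_of_le_geometric _ _ M) => N.
have := fs h (ltac:(lra)) N.
have -> : psum c h N = 0 by rewrite /psum big1 // => i _; rewrite c0 mul0r.
rewrite subr0 => /le_trans; apply; apply: ler_wpM2l; first exact: ps_approx_ge0 fs.
apply: lerXn2r; rewrite ?nnegrE ?divr_ge0 ?invr_ge0 ?(ltW r0) //.
by rewrite ler_pdivrMr //; lra.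
Qed.

Lemma analytic_eq0_on01 (H : R -> R[i]) d :
  (forall s, 0 <= s <= 1 -> analytic_at s H) -> 0 < d ->
  (forall t, 0 <= t <= d -> H t = 0) -> forall t, 0 <= t <= 1 -> H t = 0.
Proof.
move=> H_an; wlog d1 : d / d <= 1 => [base d0 Hd|].
  apply: (base (Num.min d 1)); rewrite ?ge_min ?lexx ?orbT ?lt_min ?d0 ?ltr01 //.
  by move=> t /andP[t0]; rewrite le_min => /andP[td _]; apply: Hd; rewrite t0.
move=> d0 Hd.
pose E : set R := fun u => 0 <= u <= 1 /\ forall t, 0 <= t <= u -> H t = 0.
have Ed : E d by split => //; rewrite (ltW d0).
have E_ub1 : ubound E 1 by move=> u [/andP[]].
have E_sup : has_sup E by split; [exists d | exists 1].
set S := sup E.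
have dS : d <= S := sup_upper_bound E_sup Ed.
have S1 : S <= 1 := ge_sup (ex_intro _ d Ed) E_ub1.
have below t : 0 <= t -> t < S -> H t = 0.
  move=> t0 tS; have St0 : 0 < S - t by rewrite subr_gt0.
  have [u [_ Eu] tu] := sup_adherent St0 E_sup.
  by apply: Eu; rewrite t0 /=; rewrite -/S in tu; lra.
have [c [M [r [r0 Hr]]]] := H_an S (ltac:(apply/andP; split; lra)).
set r' := Num.min r d.
have r'0 : 0 < r' by rewrite lt_min r0 d0.
have [r'r r'd] : r' <= r /\ r' <= d by rewrite !ge_min !lexx orbT.
have near_S : forall h, `|h| <= r' / 2 -> H (S + h) = 0.
  apply: ps_approx_vanish r'0 (ps_approx_le r'0 r'r Hr) _ => h h1 h2.
  by apply: below; lra.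
have E_S : E (Num.min 1 (S + r' / 2)).
  split; first by rewrite ge_min lexx le_min ler01 /=; lra.
  move=> t /andP[t0]; rewrite le_min => /andP[_ tu].
  case: (ltP t S) => [|St]; first exact: below.
  have -> : t = S + (t - S) by ring.
  by apply: near_S; rewrite ger0_norm; lra.
have S_eq1 : S = 1.
  apply/eqP; rewrite eq_le S1 leNgt /=; apply/negP => S_lt1.
  by have := sup_upper_bound E_sup E_S; rewrite -/S ge_min => /orP[]; lra.
move=> t t01; apply: E_S.2.
suff -> : Num.min 1 (S + r' / 2) = 1 by [].
by rewrite S_eq1 min_l //; lra.
Qed.

Lemma analytic_neq0_near0 (H : R -> R[i]) :
  (forall s, 0 <= s <= 1 -> analytic_at s H) -> H 1 != 0 ->
  forall d, 0 < d -> exists t, [/\ 0 <= t <= 1, t <= d & H t != 0].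
Proof.
move=> H_an H1 d d0; apply/not_existsP => H0; move/eqP: H1; apply.
have d'0 : 0 < Num.min d 1 by rewrite lt_min d0 ltr01.
apply: (analytic_eq0_on01 H_an d'0) => [t /andP[t0]|]; last by rewrite ler01 lexx.
rewrite le_min => /andP[td t1]; apply/eqP; apply: contraT => Ht.
by case: (H0 t); split => //; rewrite t0.
Qed.

Lemma series_to_bounded (u : nat -> R[i]) L :
  series_to u L -> exists K, forall k, cabs (u k) <= K.
Proof.
move=> /(_ 1 ltr01) [N0 uN0].
have part_le k : (k < N0)%N -> cabs (u k) <= \sum_(j < N0) cabs (u j).
  move=> kN; rewrite (bigD1 (Ordinal kN)) //= lerDl.
  by apply: sumr_ge0 => i _; exact: cabs_ge0.
have part0 : 0 <= \sum_(j < N0) cabs (u j) by apply: sumr_ge0 => i _; exact: cabs_ge0.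
exists (2 + \sum_(j < N0) cabs (u j)) => k.
case: (ltnP k N0) => kN; first by have := part_le k kN; lra.
have -> : u k = (\sum_(j < k.+1) u j - L) - (\sum_(j < k) u j - L).
  by rewrite big_ord_recr /=; ring.
have := ler_cabsB (\sum_(j < k.+1) u j - L) (\sum_(j < k) u j - L).
by have := uN0 k.+1 (leqW kN); have := uN0 k kN; lra.
Qed.

Lemma ps_approx_of_series g s c rho : 0 < rho ->
  (forall h, `|h| <= rho -> series_to (fun k => c k * (h ^+ k)%:C) (g (s + h))) ->
  exists M, ps_approx g s c M (rho / 2).
Proof.
move=> rho0 gs.
have [K K_ge] := series_to_bounded (gs rho (ltac:(by rewrite ger0_norm // ltW))).
have K0 : 0 <= K := le_trans (cabs_ge0 _) (K_ge 0%N).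
exists (2 * K) => h hr N.
set q := `|h| / rho.
have q0 : 0 <= q by rewrite divr_ge0 // ltW.
have q2 : q <= 2^-1 by rewrite ler_pdivrMr // mulrC; lra.
have term k : cabs (c k * (h ^+ k)%:C) <= K * q ^+ k.
  have := K_ge k; rewrite !cabsM !cabsR !normrX (ger0_norm (ltW rho0)) => ck_le.
  have -> : `|h| ^+ k = rho ^+ k * q ^+ k.
    by rewrite -exprMn /q mulrCA mulfV ?mulr1 // lt0r_neq0.
  by rewrite mulrA; apply: ler_wpM2r => //; exact: exprn_ge0.
apply: le_trans (_ : _ <= 2 * K * q ^+ N) _; last first.
  apply: ler_wpM2l; first by rewrite mulr_ge0.
  apply: lerXn2r; rewrite ?nnegrE ?divr_ge0 ?(ltW rho0) //.
  by apply: ler_wpM2l => //; rewrite lef_pV2 ?posrE //; lra.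
apply/ler_addgt0Pr => e e0.
have [N1 gsN1] := gs h (ltac:(lra)) e e0.
have := gsN1 (N + N1)%N (leq_addl _ _); rewrite big_split_ord /= -/(psum c h N).
set T := \sum_(i < N1) _ => close.
have T_le : cabs T <= 2 * K * q ^+ N.
  apply: le_trans (ler_cabs_sum _ _ _) _.
  apply: le_trans (ler_sum _ (fun (i : 'I_N1) _ => term (N + i)%N)) _.
  under eq_bigr do rewrite exprD mulrA.
  rewrite -mulr_sumr (_ : 2 * K * q ^+ N = K * q ^+ N * 2); last by ring.
  apply: ler_wpM2l; first by rewrite mulr_ge0 ?exprn_ge0.
  exact: sum_expr_le2.
have := ler_cabs_distD (g (s + h)) (psum c h N + T) (psum c h N).
by rewrite addrAC subrr add0r; rewrite cabs_distC in close; lra.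
Qed.

Lemma analytic01_analytic_at f : analytic01 f ->
  exists g, (forall x, 0 <= x <= 1 -> g x = f x) /\
            (forall s, 0 <= s <= 1 -> analytic_at s g).
Proof.
case=> a [b [g [a0 b1 gf gs]]]; exists g; split => // s /andP[s0 s1].
have [c [r [r0 s_series]]] := gs s (ltac:(apply/andP; split; lra)).
pose m := Num.min r (Num.min (s - a) (b - s)).
have m_gt0 : 0 < m by rewrite !lt_min r0 !subr_gt0; apply/and3P; split; lra.
have [mr mas mbs] : [/\ m <= r, m <= s - a & m <= b - s].
  by rewrite !ge_min !lexx !orbT.
have [M gM] : exists M, ps_approx g s c M (m / 2 / 2).
  apply: ps_approx_of_series; first by rewrite divr_gt0.
  move=> h hm; have := ler_norm h; have := ler_norm (- h); rewrite normrN => hle Nhle.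
  have shr : `|s + h - s| < r by rewrite addrAC subrr add0r; lra.
  have := s_series (s + h) (ltac:(apply/andP; split; lra)) shr.
  by rewrite addrAC subrr add0r.
by exists c, M, (m / 2 / 2); split => //; rewrite !divr_gt0.
Qed.

End PowerSeries.

(** * Analytic functions form a ring *)

(* [R] with a chosen point, so that [functions] equips [pR R -> R[i]] with
   its pointwise ring structure. *)
Definition pR (R : realType) : Type := R.
HB.instance Definition _ (R : realType) := Choice.copy (pR R) R.
HB.instance Definition _ (R : realType) := isPointed.Build (pR R) 0.

Definition analytic_pred (R : realType) (s : R) : {pred pR R -> R[i]} :=
  fun f => `[< analytic_at s f >].

Lemma analytic_subring_closed (R : realType) (s : R) :
  subring_closed (analytic_pred s).
Proof.
split.
- apply/asboolP; exists (fun k => if k == 0%N then 1 else 0), (cabs (1 : R[i])), 1.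
  by split; [exact: ltr01 | exact: ps_approx_cst].
- move=> f g /asboolP fs /asboolP gs; apply/asboolP.
  have [cf [cg [Mf [Mg [r [r0 fr gr]]]]]] := analytic_at_common fs gs.
  by exists (fun k => cf k - cg k), (Mf + Mg), r; split; last exact: ps_approx_sub.
- move=> f g /asboolP fs /asboolP gs; apply/asboolP.
  have [cf [cg [Mf [Mg [r [r0 fr gr]]]]]] := analytic_at_common fs gs.
  exists (cauchy cf cg), (11 * Mf * Mg), (r / 4).
  by split; [rewrite divr_gt0 | exact: ps_approx_mul].
Qed.

HB.instance Definition _ (R : realType) (s : R) :=
  GRing.isSubringClosed.Build _ (analytic_pred s) (analytic_subring_closed s).

Definition eval_at (R : realType) (t : R) (f : pR R -> R[i]) : R[i] := f t.

Fact eval_at_is_zmod_morphism (R : realType) (t : R) :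
  zmod_morphism (eval_at t).
Proof. by []. Qed.

Fact eval_at_is_monoid_morphism (R : realType) (t : R) :
  monoid_morphism (eval_at t).
Proof. by []. Qed.

HB.instance Definition _ (R : realType) (t : R) :=
  GRing.isZmodMorphism.Build _ _ (eval_at t) (eval_at_is_zmod_morphism t).
HB.instance Definition _ (R : realType) (t : R) :=
  GRing.isMonoidMorphism.Build _ _ (eval_at t) (eval_at_is_monoid_morphism t).

Lemma analytic_at_disc_mx (R : realType) (s : R) n (G : 'M[pR R -> R[i]]_n) :
  (forall i j, analytic_at s (G i j)) -> analytic_at s (disc_mx G).
Proof.
move=> Gs; apply/(asboolP (analytic_at s _)).
by apply: (@rpred_disc_mx _ (analytic_pred s)) => i j; apply/asboolP.
Qed.

Lemma disc_mx_eval (R : realType) (t : R) n (G : 'M[pR R -> R[i]]_n.+1) :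
  disc_mx G t = disc_mx (map_mx (eval_at t) G).
Proof. exact: (map_disc_mx (eval_at t)). Qed.

Lemma frob_eval_near (R : realType) n (G : 'M[pR R -> R[i]]_n) (s e : R) :
  (forall i j, analytic_at s (G i j)) -> 0 < e ->
  exists2 d, 0 < d & forall h, `|h| <= d ->
    frob (map_mx (eval_at s) G - map_mx (eval_at (s + h)) G) < e.
Proof.
move=> Gs e0; pose eta := e / (n%:R + 1).
have n1 : 0 < n%:R + 1 :> R by rewrite ltr_wpDl ?ler0n.
have eta0 : 0 < eta by rewrite divr_gt0.
have [d d0 Gd] : exists2 d, 0 < d & forall ij : 'I_n * 'I_n, forall h,
    `|h| <= d -> cabs (G ij.1 ij.2 (s + h) - G ij.1 ij.2 s) <= eta.
  apply: exists_delta_fin => [ij d d' /andP[_ d'd] Pd h hd'|ij].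
    exact: Pd h (le_trans hd' d'd).
  exact: analytic_at_cont (Gs ij.1 ij.2) eta0.
exists d => // h hd; apply: le_lt_trans (frob_le (ltW eta0) _) _ => [i j|].
  by rewrite !mxE cabs_distC; exact: Gd (i, j) h hd.
by rewrite /eta mulrA ltr_pdivrMr // mulrDr mulr1 mulrC ltrDl.
Qed.

Lemma analytic01_mx (R : realType) n (p : R -> 'M[R[i]]_n) :
  (forall i j, analytic01 (fun t => p t i j)) ->
  exists G : 'M[pR R -> R[i]]_n,
    (forall t, 0 <= t <= 1 -> map_mx (eval_at t) G = p t) /\
    (forall s, 0 <= s <= 1 -> forall i j, analytic_at s (G i j)).
Proof.
move=> p_an.
have [g gP] :=
  choice (fun ij : 'I_n * 'I_n => analytic01_analytic_at (p_an ij.1 ij.2)).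
exists (\matrix_(i, j) g (i, j)); split.
  by move=> t t01; apply/matrixP => i j; rewrite !mxE /eval_at (gP (i, j)).1.
by move=> s s01 i j; rewrite mxE; exact: (gP (i, j)).2.
Qed.

Unset Implicit Arguments.

Theorem theorem4p4 (R : realType) (n : nat) (Gamma : 'M[R[i]]_n -> Prop)
  (HGamma : forall A, Gamma A -> real_spectrum A)
  (Hpath : forall A B, Gamma A -> Gamma B ->
     exists p : R -> 'M[R[i]]_n,
       [/\ forall i j, analytic01 (fun t => p t i j),
           p 0 = A, p 1 = B &
           forall t, 0 <= t <= 1 -> Gamma (p t)])
  (Hd : exists A, Gamma A /\ distinct_eigs A) :
  forall A, Gamma A -> forall e : R, 0 < e ->
    exists B, [/\ Gamma B, distinct_eigs B & frob (A - B) < e].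
Proof.
move=> A GA e e0.
case: n Gamma HGamma Hpath Hd A GA => [|n] Gamma _ Hpath [B [GB dB]] A GA.
  exists A; split; [exact: GA | by exists [::] | by rewrite /frob big_ord0 sqrtr0].
have [p [p_an p0 p1 p_Gamma]] := Hpath A B GA GB.
have [G [Gp G_an]] := analytic01_mx p_an.
have disc_p t : 0 <= t <= 1 -> disc_mx G t = disc_mx (p t).
  by move=> t01; rewrite disc_mx_eval Gp.
have disc_an s : 0 <= s <= 1 -> analytic_at s (disc_mx G).
  by move=> s01; apply: analytic_at_disc_mx; exact: G_an.
have [d d0 near_A] := frob_eval_near (G_an 0 (ltac:(by rewrite lexx ler01))) e0.
have [t [t01 td disc_t]] := analytic_neq0_near0 disc_an
  (ltac:(by rewrite disc_p ?lexx ?ler01 // p1; apply/disc_mx_distinct_eigs)) d0.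
exists (p t); split; first exact: p_Gamma.
  by apply/disc_mx_distinct_eigs; rewrite -disc_p.
have t0 : 0 <= t by case/andP: t01.
by have := near_A t (ltac:(by rewrite ger0_norm)); rewrite add0r !Gp ?p0 ?lexx ?ler01.
Qed.
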